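(* Let $d$ be a positive integer and $H$ a complex Hilbert space. Let $T=(T_1,\ldots,T_d)$ and $\tilde T=(\tilde T_1,\ldots,\tilde T_d)$ be two commuting operator-valued multishifts on $\ell^2_H(\mathbb N^d)$ with respective unitary operator weights $\{A^{(j)}_\alpha:\alpha\in\mathbb N^d,\ j=1,\ldots,d\}$ and $\{\tilde A^{(j)}_\alpha:\alpha\in\mathbb N^d,\ j=1,\ldots,d\}$. Then $T$ and $\tilde T$ are unitarily equivalent, i.e. there is a unitary $U$ on $\ell^2_H(\mathbb N^d)$ with $UT_jU^*=\tilde T_j$ for all $j=1,\ldots,d$.
   Context: $\mathbb N$ denotes the nonnegative integers; $\varepsilon_j\in\mathbb N^d$ has $1$ in the $j$-th place and $0$ elsewhere. $\ell^2_H(\mathbb N^d)=\bigoplus_{\alpha\in\mathbb N^d}H$ is the orthogonal direct sum of copies of $H$ indexed by $\mathbb N^d$. Given bounded operators $A^{(j)}_\alpha:H\to H$ ($\alpha\in\mathbb N^d$, $j=1,\ldots,d$), the operator-valued multishift with these operator weights is the $d$-tuple $T=(T_1,\ldots,T_d)$ defined by $T_j(\oplus_\alpha x_\alpha)=\oplus_\alpha A^{(j)}_{\alpha-\varepsilon_j}x_{\alpha-\varepsilon_j}$, where the term is interpreted as $0$ when $\alpha_j=0$ (with domain $\{x:\sum_\alpha\|A^{(j)}_\alpha x_\alpha\|^2<\infty\}$). It is called a commuting operator-valued multishift if $\sup_{\alpha}\|A^{(j)}_\alpha\|<\infty$ for each $j$ and $A^{(i)}_{\alpha+\varepsilon_j}A^{(j)}_\alpha=A^{(j)}_{\alpha+\varepsilon_i}A^{(i)}_\alpha$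 for all $\alpha\in\mathbb N^d$ and $i,j=1,\ldots,d$. *)

From HB Require Import structures.
From mathcomp Require Import all_boot all_order all_algebra.
From mathcomp Require Import complex.
From mathcomp Require Import boolp classical_sets reals.
Set Implicit Arguments. Unset Strict Implicit. Unset Printing Implicit Defensive.
Import Order.TTheory GRing.Theory Num.Theory.
Local Open Scope ring_scope.

Section Hilbert.
Variable R : realType.
Local Notation C := (R[i])%type.

Definition inner_product (H : lmodType C) (ip : H -> H -> C) : Prop :=
  [/\ (forall (a : C) (x y z : H), ip (a *: x + y) z = a * ip x z + ip y z),
      (forall x y : H, ip y x = (ip x y)^*),
      (forall x : H, 0 <= ip x x) &
      (forall x : H, ip x x = 0 -> x = 0)].

Definition hnorm (H : lmodType C) (ip : H -> H -> C) (x : H) : R :=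
  Num.sqrt (complex.Re (ip x x)).

Definition hilbert_space (H : lmodType C) (ip : H -> H -> C) : Prop :=
  inner_product ip /\
  forall u : nat -> H,
    (forall e : R, 0 < e -> exists N : nat, forall m n : nat,
        (N <= m)%N -> (N <= n)%N -> hnorm ip (u m - u n) < e) ->
    exists l : H, forall e : R, 0 < e -> exists N : nat, forall n : nat,
        (N <= n)%N -> hnorm ip (u n - l) < e.

Definition linear_op (H : lmodType C) (f : H -> H) : Prop :=
  forall (a : C) (x y : H), f (a *: x + y) = a *: f x + f y.

Definition unitary_op (H : lmodType C) (ip : H -> H -> C) (f : H -> H) : Prop :=
  [/\ linear_op f,
      (forall x : H, hnorm ip (f x) = hnorm ip x) &
      (forall y : H, exists x : H, f x = y)].

Definition mindex (d : nat) := {ffun 'I_d -> nat}.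

Definition addeps d (a : mindex d) (j : 'I_d) : mindex d :=
  [ffun k => if k == j then (a k).+1 else a k].
Definition subeps d (a : mindex d) (j : 'I_d) : mindex d :=
  [ffun k => if k == j then (a k).-1 else a k].

Definition psum (H : lmodType C) (ip : H -> H -> C) d (x : mindex d -> H)
  (s : seq (mindex d)) : R :=
  \sum_(a <- s) hnorm ip (x a) ^+ 2.

Definition l2 (H : lmodType C) (ip : H -> H -> C) d (x : mindex d -> H) : Prop :=
  exists M : R, forall s : seq (mindex d), uniq s -> psum ip x s <= M.

Definition l2nsq (H : lmodType C) (ip : H -> H -> C) d (x : mindex d -> H) : R :=
  sup [set psum ip x s | s in [set s : seq (mindex d) | uniq s]]%classic.

Definition unitary_l2 (H : lmodType C) (ip : H -> H -> C) d
  (U : (mindex d -> H) -> (mindex d -> H)) : Prop :=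
  [/\ (forall x, l2 ip x -> l2 ip (U x)),
      (forall (a : C) x y, l2 ip x -> l2 ip y ->
          U (fun b => a *: x b + y b) = (fun b => a *: U x b + U y b)),
      (forall x, l2 ip x -> l2nsq ip (U x) = l2nsq ip x) &
      (forall y, l2 ip y -> exists2 x, l2 ip x & U x = y)].

Definition weights (H : lmodType C) d := mindex d -> 'I_d -> H -> H.

Definition mshift (H : lmodType C) d (A : weights H d) (j : 'I_d)
  (x : mindex d -> H) : mindex d -> H :=
  fun a => if a j == 0%N then 0 else A (subeps a j) j (x (subeps a j)).

Definition mshift_dom (H : lmodType C) (ip : H -> H -> C) d (A : weights H d)
  (j : 'I_d) (x : mindex d -> H) : Prop :=
  l2 ip x /\ l2 ip (fun a => A a j (x a)).

Definition commuting_multishift (H : lmodType C) (ip : H -> H -> C) d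
  (A : weights H d) : Prop :=
  [/\ (forall a j, linear_op (A a j)),
      (forall j, exists M : R, forall a x, hnorm ip (A a j x) <= M * hnorm ip x) &
      (forall a i j x, A (addeps a j) i (A a j x) = A (addeps a i) j (A a i x))].

End Hilbert.

(* The weights along any monotone lattice path from 0 to alpha compose to the
   same unitary P_alpha, because the commutation relations let adjacent steps
   be swapped.  The unitaries W_alpha := Pt_alpha o P_alpha^-1 then satisfy
   W_(alpha + eps_j) o A^(j)_alpha = At^(j)_alpha o W_alpha, so the
   block-diagonal operator (+)_alpha W_alpha is a unitary of ell^2_H(N^d)
   intertwining the two multishifts. *)
From HB Require Import structures.
From mathcomp Require Import all_boot all_order all_algebra.
From mathcomp Require Import complex.
From mathcomp Require Import boolp classical_sets reals.
Set Implicit Arguments. Unset Strict Implicit. Unset Printing Implicit Defensive.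
Import Order.TTheory GRing.Theory Num.Theory.
Local Open Scope ring_scope.

Section PathProducts.
Variables (T : Type) (d : nat) (A : mindex d -> 'I_d -> T -> T).
Hypothesis A_comm : forall a i j x,
  A (addeps a j) i (A a j x) = A (addeps a i) j (A a i x).

Definition mcount (s : seq 'I_d) : mindex d := [ffun k => count_mem k s].

Lemma mcount_cons j s : mcount (j :: s) = addeps (mcount s) j.
Proof. by apply/ffunP => k; rewrite !ffunE /= eq_sym; case: (k == j). Qed.

Lemma eq_mcount s t : (mcount s == mcount t) = perm_eq s t.
Proof.
apply/eqP/allP => [e x _ | /allP/permP e]; last by apply/ffunP => k; rewrite !ffunE.
by apply/eqP; have := congr1 (fun f : mindex d => f x) e; rewrite !ffunE.
Qed.

(* [path_prod (j_n :: ... :: j_1)] applies A^(j_1) first, at the origin. *)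
Fixpoint path_prod (s : seq 'I_d) : T -> T :=
  if s is j :: s' then fun x => A (mcount s') j (path_prod s' x) else id.

Lemma path_prod_rem j t : j \in t -> path_prod t =1 path_prod (j :: rem j t).
Proof.
elim: t => [|i t IH] //=; rewrite in_cons.
case: (eqVneq j i) => [<- //| ne /= jt x].
have /eqP e : mcount t == mcount (j :: rem j t) by rewrite eq_mcount perm_to_rem.
by rewrite (IH jt x) /= e !mcount_cons A_comm.
Qed.

Lemma path_prod_perm s t : perm_eq s t -> path_prod s =1 path_prod t.
Proof.
elim: s t => [|j s IH] t pst x.
  by move: pst; rewrite perm_sym => /perm_nilP ->.
have jt : j \in t by rewrite -(perm_mem pst) mem_head.
have pst' : perm_eq s (rem j t).
  by rewrite -(perm_cons j) (perm_trans pst) // perm_to_rem.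
have /eqP e : mcount s == mcount (rem j t) by rewrite eq_mcount.
by rewrite (path_prod_rem jt) /= e (IH _ pst').
Qed.

Definition mpath (a : mindex d) : seq 'I_d :=
  flatten [seq nseq (a i) i | i <- enum 'I_d].

Lemma mcount_mpath a : mcount (mpath a) = a.
Proof.
apply/ffunP => k; rewrite ffunE count_flatten -map_comp sumnE big_map.
rewrite (bigD1_seq k) ?mem_enum ?enum_uniq //= count_nseq /= eqxx mul1n.
by rewrite big1 ?addn0 // => i ne; rewrite count_nseq /= (negbTE ne).
Qed.

Definition mprod (a : mindex d) : T -> T := path_prod (mpath a).

Lemma mprod_addeps a j x : mprod (addeps a j) x = A a j (mprod a x).
Proof.
rewrite /mprod (@path_prod_perm _ (j :: mpath a)) /= ?mcount_mpath //.
by rewrite -eq_mcount mcount_cons !mcount_mpath.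
Qed.

End PathProducts.

Section UnitaryOperators.
Variables (R : realType) (H : lmodType R[i]) (ip : H -> H -> R[i]).
Hypothesis ipH : inner_product ip.

Lemma linear_op0 (f : H -> H) : linear_op f -> f 0 = 0.
Proof.
move=> lf; have := lf 1 0 0; rewrite !scale1r addr0 => e.
by apply: (addrI (f 0)); rewrite addr0 -e.
Qed.

Lemma linear_opB (f : H -> H) x y : linear_op f -> f (x - y) = f x - f y.
Proof. by move=> lf; have := lf (-1) y x; rewrite !scaleN1r addrC => ->; rewrite addrC. Qed.

Lemma ip0l z : ip 0 z = 0.
Proof.
case: ipH => ipD _ _ _; have := ipD 1 0 0 z; rewrite scale1r addr0 mul1r => e.
by apply: (addrI (ip 0 z)); rewrite addr0 -e.
Qed.

Lemma hnorm_eq0 x : hnorm ip x = 0 -> x = 0.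
Proof.
move=> /eqP; rewrite /hnorm sqrtr_eq0 => xx_le0.
case: ipH => _ _ ip_ge0 ip_eq0; apply: ip_eq0.
move: (ip_ge0 x) xx_le0; rewrite lecE /=.
case: (ip x x) => a b /= /andP[/eqP -> a_ge0] a_le0.
by have -> : a = 0 by apply/eqP; rewrite eq_le a_le0 a_ge0.
Qed.

Lemma unitary_inj f : unitary_op ip f -> injective f.
Proof.
case=> lf nf _ x y e; apply/eqP; rewrite -subr_eq0; apply/eqP/hnorm_eq0.
by rewrite -nf linear_opB // e subrr /hnorm ip0l /= sqrtr0.
Qed.

Lemma unitary_id : unitary_op ip id.
Proof. by split => // y; exists y. Qed.

Lemma unitary_comp f g : unitary_op ip f -> unitary_op ip g -> unitary_op ip (f \o g).
Proof.
case=> lf nf sf [lg ng sg]; split => [a x y | x | y] /=.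
- by rewrite lg lf.
- by rewrite nf ng.
- by have [z <-] := sf y; have [x <-] := sg z; exists x.
Qed.

Lemma unitary_inv f : unitary_op ip f ->
  exists g, [/\ unitary_op ip g, cancel f g & cancel g f].
Proof.
move=> uf; have [lf nf sf] := uf; have [g gK] := choice sf.
have fK : cancel f g by move=> x; apply: (unitary_inj uf); rewrite gK.
exists g; split => //; split => [a x y | y | x].
- by apply: (unitary_inj uf); rewrite lf !gK.
- by rewrite -nf gK.
- by exists (f x).
Qed.

End UnitaryOperators.

Section Intertwiner.
Variables (R : realType) (d : nat) (H : lmodType R[i]) (ip : H -> H -> R[i]).
Hypothesis ipH : inner_product ip.

Lemma mprod_unitary (A : weights H d) :
  (forall a j, unitary_op ip (A a j)) -> forall a, unitary_op ip (mprod A a).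
Proof.
move=> uA a; rewrite /mprod; elim: (mpath a) => [|j s IH] /=.
  exact: unitary_id.
exact: unitary_comp (uA _ _) IH.
Qed.

Lemma unitary_weights_intertwiner (A At : weights H d) :
  (forall a i j x, A (addeps a j) i (A a j x) = A (addeps a i) j (A a i x)) ->
  (forall a i j x, At (addeps a j) i (At a j x) = At (addeps a i) j (At a i x)) ->
  (forall a j, unitary_op ip (A a j)) -> (forall a j, unitary_op ip (At a j)) ->
  exists W : mindex d -> H -> H, (forall a, unitary_op ip (W a)) /\
    forall a j x, W (addeps a j) (A a j x) = At a j (W a x).
Proof.
move=> cA cAt uA uAt.
have [g /all_and3[ug mprodK gK]] := choice (fun a => unitary_inv ipH (mprod_unitary uA a)).
exists (fun a => mprod At a \o g a); split => [a | a j x] /=.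
  exact: unitary_comp (mprod_unitary uAt a) (ug a).
have -> : g (addeps a j) (A a j x) = g a x.
  by rewrite -{1}[x](gK a) -mprod_addeps ?mprodK.
by rewrite mprod_addeps.
Qed.

End Intertwiner.

Section BlockDiagonal.
Variables (R : realType) (d : nat) (H : lmodType R[i]) (ip : H -> H -> R[i]).

Definition diag_op (W : mindex d -> H -> H) (x : mindex d -> H) : mindex d -> H :=
  fun b => W b (x b).

Lemma eq_psum (x y : mindex d -> H) :
  (forall b, hnorm ip (x b) = hnorm ip (y b)) -> psum ip x = psum ip y.
Proof. by move=> e; apply: funext => s; apply: eq_bigr => b _; rewrite e. Qed.

Lemma eq_l2 (x y : mindex d -> H) :
  (forall b, hnorm ip (x b) = hnorm ip (y b)) -> l2 ip x <-> l2 ip y.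
Proof. by move=> e; rewrite /l2 (eq_psum e). Qed.

Lemma mshift_dom_unitary (A : weights H d) j x :
  (forall a j, unitary_op ip (A a j)) -> mshift_dom ip A j x <-> l2 ip x.
Proof.
move=> uA; split=> [[] // | x_l2]; split => //.
by apply/(eq_l2 (y := x)) => // b; case: (uA b j).
Qed.

Variable W : mindex d -> H -> H.
Hypothesis uW : forall a, unitary_op ip (W a).

Lemma diag_op_hnorm x b : hnorm ip (diag_op W x b) = hnorm ip (x b).
Proof. by rewrite /diag_op; case: (uW b). Qed.

Lemma diag_op_l2 x : l2 ip (diag_op W x) <-> l2 ip x.
Proof. exact/eq_l2/diag_op_hnorm. Qed.

Lemma diag_op_unitary : unitary_l2 ip (diag_op W).
Proof.
split=> [x /diag_op_l2 // | a x y _ _ | x _ | y y_l2].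
- by apply: funext => b; case: (uW b) => lW _ _; rewrite /diag_op lW.
- by rewrite /l2nsq (eq_psum (diag_op_hnorm x)).
have [x xK] := choice (fun b => let: And3 _ _ sW := uW b in sW (y b)).
have Wx : diag_op W x = y by apply: funext => b; apply: xK.
by exists x => //; apply/diag_op_l2; rewrite Wx.
Qed.

Lemma addeps_subeps (b : mindex d) j : b j != 0%N -> addeps (subeps b j) j = b.
Proof.
move=> bj; apply/ffunP => k; rewrite !ffunE; case: eqP => [-> | //].
by rewrite prednK // lt0n.
Qed.

Lemma diag_op_mshift (A At : weights H d) j x :
  (forall a j x, W (addeps a j) (A a j x) = At a j (W a x)) ->
  diag_op W (mshift A j x) = mshift At j (diag_op W x).
Proof.
move=> WA; apply: funext => b; rewrite /diag_op /mshift.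
case: eqP => [_ | /eqP bj]; first by case: (uW b) => lW _ _; apply: linear_op0.
by rewrite -{1}(addeps_subeps bj) WA.
Qed.

End BlockDiagonal.

Theorem lemma3p2 (R : realType) (d : nat) (H : lmodType R[i]) (ip : H -> H -> R[i])
  (A At : weights H d) :
  (0 < d)%N ->
  hilbert_space ip ->
  commuting_multishift ip A ->
  commuting_multishift ip At ->
  (forall a j, unitary_op ip (A a j)) ->
  (forall a j, unitary_op ip (At a j)) ->
  exists U : (mindex d -> H) -> (mindex d -> H),
    unitary_l2 ip U /\
    forall (j : 'I_d) (x : mindex d -> H), l2 ip x ->
      (mshift_dom ip A j x <-> mshift_dom ip At j (U x)) /\
      (mshift_dom ip A j x -> U (mshift A j x) = mshift At j (U x)).
Proof.
move=> _ [ipH _] [_ _ cA] [_ _ cAt] uA uAt.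
have [W [uW WA]] := unitary_weights_intertwiner ipH cA cAt uA uAt.
exists (diag_op W); split; first exact: diag_op_unitary.
move=> j x _; split; last by rewrite (diag_op_mshift uW j x WA).
by rewrite (mshift_dom_unitary _ _ uA) (mshift_dom_unitary _ _ uAt) diag_op_l2.
Qed.
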